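(* The map sending a ranked $X$-tree $(\mathcal{N},r)$ to the set $\{\mathcal{P}(\mathcal{S}_i(\mathcal{N})) : 0\le i\le\sigma(r)\}$ induces a bijection between isomorphism classes of ranked $X$-trees and subsets of $\mathfrak{B}(X)$ that contain the partition $\{X\}$ and whose elements are pairwise comparable with respect to $\sqsubseteq$ (i.e. chains of the poset $(\mathfrak{B}(X),\sqsubseteq)$ containing $\{X\}$).
   Context: Let $X$ be a finite non-empty set. A rooted DAG $N=(V,A)$ is a finite directed acyclic graph with a vertex $\rho$ of indegree $0$ (the root) from which every vertex is reachable by a directed path. Leaf: outdegree $0$; tree vertex: indegree $\le1$; reticulation vertex: indegree $\ge2$; if $(u,v)\in A$ then $u$ is a parent of $v$. A reticulation cycle consists of two distinct directed paths with the same start and end vertex and no other common vertices. A rooted $X$-cactus $\mathcal{N}=(N,\varphi)$ is a rooted DAG with a map $\varphi:X\to V$ such that every vertex has indegree at most $2$, no two distinct reticulation cycles share an arc, and $\varphi(X)$ contains all leaves and all tree vertices of outdegree $1$. A rooted $X$-tree is a rooted $X$-cactus without reticulation vertices. A time-stamp function is $t:V\to\mathbb{R}_{\ge0}$ with $t(v)=0$ for $v\in\varphi(X)$, $t(u)>t(v)$ for arcs $(u,v)$ with $v$ not a reticulation vertex, and $t(v)=t(p_1)=t(p_2)$ for each reticulation vertex $v$ with parents $p_1,p_2$. Its size is $\sigma(t)=|t(V)|-1$. A ranking is a time-stamp function $r$ with $r(V)=\{0,\dots,\sigma(r)\}$; a ranked $X$-tree is a rooted $X$-tree with a ranking. Two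 ranked $X$-trees $((V',A'),\varphi'),r')$ and $((V'',A''),\varphi''),r'')$ are isomorphic if there is a digraph isomorphism $f:V'\to V''$ with $f(\varphi'(x))=\varphi''(x)$ for all $x\in X$ and $r'(v)=r''(f(v))$ for all $v\in V'$. A vertex $u$ is a descendant of $v$ if some directed path from the root to $u$ contains $v$; it is a strict descendant if every directed path from the root to $u$ contains $v$, and a non-strict descendant otherwise. $S(u)=\{x\in X:\varphi(x)$ is a strict descendant of $u\}$, $H(u)=\{x\in X:\varphi(x)$ is a non-strict descendant of $u\}$. For a ranked $(\mathcal{N},r)$ and $0\le i\le\sigma(r)$ let $V_i$ be the set of vertices $u$ with $r(u)\le i$ and $r(p)>i$ for all parents $p$ of $u$, and $\mathcal{S}_i(\mathcal{N})=\{(S(u),H(u)):u\in V_i\}\cup\{(H(u),\emptyset):u\in V_i,\ H(u)\neq\emptyset\}$. For a collection $\mathcal{S}$ of pairs $(S,H)$, $\mathcal{P}(\mathcal{S})=\{S:(S,H)\in\mathcal{S}\}$. $\mathfrak{B}(X)$ is the set of partitions of $X$ (sets of non-empty pairwise disjoint subsets with union $X$), and $\mathcal{P}_1\sqsubseteq\mathcal{P}_2$ means every block of $\mathcal{P}_1$ is contained in some block of $\mathcal{P}_2$. *)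

From HB Require Import structures.
From mathcomp Require Import all_boot.
From mathcomp Require Import boolp.

Set Implicit Arguments.
Unset Strict Implicit.
Unset Printing Implicit Defensive.

Section Digraph.
Variable V : finType.
Variable arc : rel V.

Definition indeg (v : V) : nat := #|[set p | arc p v]|.
Definition outdeg (v : V) : nat := #|[set w | arc v w]|.
Definition leafv (v : V) : bool := outdeg v == 0.
Definition tree_vertex (v : V) : bool := indeg v <= 1.
Definition reticulation (v : V) : bool := 2 <= indeg v.

Definition dpath (q : seq V) : bool :=
  if q is a :: q' then path arc a q' else false.

Definition path_arcs (q : seq V) : seq (V * V) := zip q (behead q).

Definition acyclic : Prop :=
  forall (v : V) (p : seq V), path arc v p -> last v p = v -> p = [::].

Definition rooted_DAG (rho : V) : Prop :=
  [/\ acyclic, indeg rho = 0 & forall v, connect arc rho v].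

Definition reticulation_cycle (q1 q2 : seq V) : Prop :=
  [/\ dpath q1, dpath q2, q1 <> q2 &
      exists s t, [/\ head s q1 = s, head s q2 = s, last s q1 = t, last s q2 = t &
        forall w, w \in q1 -> w \in q2 -> w = s \/ w = t]].

(* no two distinct reticulation cycles share an arc; a cycle is the unordered
   pair of its two paths *)
Definition no_shared_arc : Prop :=
  forall q1 q2 q1' q2', reticulation_cycle q1 q2 -> reticulation_cycle q1' q2' ->
    (exists e, e \in path_arcs q1 ++ path_arcs q2 /\ e \in path_arcs q1' ++ path_arcs q2') ->
    (q1' = q1 /\ q2' = q2) \/ (q1' = q2 /\ q2' = q1).

End Digraph.

Definition rooted_X_cactus (X V : finType) (arc : rel V) (rho : V) (phi : X -> V) : Prop :=
  [/\ rooted_DAG arc rho,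
      forall v, indeg arc v <= 2,
      no_shared_arc arc &
      forall v, (leafv arc v || (tree_vertex arc v && (outdeg arc v == 1))) ->
                exists x, phi x = v].

Definition rooted_X_tree (X V : finType) (arc : rel V) (rho : V) (phi : X -> V) : Prop :=
  rooted_X_cactus arc rho phi /\ forall v, ~~ reticulation arc v.

Definition tsize (V : finType) (t : V -> nat) : nat :=
  (size (undup [seq t v | v <- enum V])).-1.

Definition time_stamp (X V : finType) (arc : rel V) (phi : X -> V) (t : V -> nat) : Prop :=
  [/\ forall x, t (phi x) = 0,
      forall u v, arc u v -> ~~ reticulation arc v -> t v < t u &
      forall u v, arc u v -> reticulation arc v -> t u = t v].

Definition ranking (X V : finType) (arc : rel V) (phi : X -> V) (r : V -> nat) : Prop :=
  time_stamp arc phi r /\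
  forall k, (k \in [seq r v | v <- enum V]) = (k <= tsize r).

Record rankedXTree (X : finType) := RankedXTree {
  rt_V : finType;
  rt_arc : rel rt_V;
  rt_root : rt_V;
  rt_phi : X -> rt_V;
  rt_rank : rt_V -> nat;
  rt_is_tree : rooted_X_tree rt_arc rt_root rt_phi;
  rt_is_ranking : ranking rt_arc rt_phi rt_rank }.

Definition rt_iso (X : finType) (T1 T2 : rankedXTree X) : Prop :=
  exists f : rt_V T1 -> rt_V T2,
    [/\ bijective f,
        forall u v, @rt_arc X T2 (f u) (f v) = @rt_arc X T1 u v,
        forall x, f (@rt_phi X T1 x) = @rt_phi X T2 x &
        forall v, @rt_rank X T1 v = @rt_rank X T2 (f v)].

Section Clusters.
Variables (X V : finType) (arc : rel V) (rho : V) (phi : X -> V).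

Definition root_path (u : V) (p : seq V) : Prop := path arc rho p /\ last rho p = u.

Definition descendant (u v : V) : Prop :=
  exists p, root_path u p /\ v \in rho :: p.
Definition strict_descendant (u v : V) : Prop :=
  forall p, root_path u p -> v \in rho :: p.
Definition nonstrict_descendant (u v : V) : Prop :=
  descendant u v /\ ~ strict_descendant u v.

Definition Sset (u : V) : {set X} := [set x | `[< strict_descendant (phi x) u >]].
Definition Hset (u : V) : {set X} := [set x | `[< nonstrict_descendant (phi x) u >]].

Variable r : V -> nat.

Definition Vi (i : nat) : {set V} :=
  [set u | (r u <= i) && [forall p, arc p u ==> (i < r p)]].

Definition Si (i : nat) : {set {set X} * {set X}} :=
  [set (Sset u, Hset u) | u in Vi i] :|:
  [set (Hset u, set0) | u in [set u in Vi i | Hset u != set0]].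

End Clusters.

Definition Pof (X : finType) (S : {set {set X} * {set X}}) : {set {set X}} :=
  [set s.1 | s in S].

Definition partition_chain (X : finType) (T : rankedXTree X) : {set {set {set X}}} :=
  [set Pof (Si (@rt_arc X T) (@rt_root X T) (@rt_phi X T) (@rt_rank X T) i)
     | i : 'I_(tsize (@rt_rank X T)).+1].

Definition refines (X : finType) (P1 P2 : {set {set X}}) : Prop :=
  forall B, B \in P1 -> exists2 B', B' \in P2 & B \subset B'.

Definition chain_with_top (X : finType) (C : {set {set {set X}}}) : Prop :=
  [/\ forall P, P \in C -> partition P [set: X],
      [set [set: X]] \in C &
      forall P Q, P \in C -> Q \in C -> refines P Q \/ refines Q P].

From Pilot Require Import Defs.
From HB Require Import structures.
From mathcomp Require Import all_boot.
From mathcomp Require Import boolp.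

(** In a ranked X-tree there are no reticulations, so every H-set is empty
    and the S-set of a vertex u is its cluster, the set of leaf labels below u.
    Hence P(S_i) is the set of clusters of the vertices alive at time i, and
    these partitions of X coarsen as i grows, ending with {X} at the root.

    The tree is recovered from this chain up to isomorphism: its vertices are
    the blocks occurring in the chain, its arcs are the covering pairs for
    proper inclusion among these blocks, the leaf x is the least block
    containing x, and the rank of a block B is the number of partitions of the
    chain having a block strictly inside B.  Conversely, the same recipe
    applied to an arbitrary chain of partitions containing {X} yields a ranked
    X-tree whose chain is the given one; the rank assignment is onto an initial
    segment because every partition of the chain has a block that occurs in no
    strictly finer partition of the chain. *)

Set Implicit Arguments.
Unset Strict Implicit.
Unset Printing Implicit Defensive.

(* Unqualified, [tsize] would be the size of a tuple. *)
Local Notation tsize := Defs.tsize.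

Lemma tsize_iota (V : finType) (r : V -> nat) n :
  (forall k, (k \in [seq r v | v <- enum V]) = (k < n.+1)) -> tsize r = n.
Proof.
move=> rV; have : perm_eq (undup [seq r v | v <- enum V]) (iota 0 n.+1).
  apply: uniq_perm; rewrite ?undup_uniq ?iota_uniq // => k.
  by rewrite mem_undup rV mem_iota.
by rewrite /tsize => /perm_size ->; rewrite size_iota.
Qed.

Lemma card_ord_lt n k : k <= n -> #|[pred i : 'I_n | i < k]| = k.
Proof.
move=> kn; have widen_inj : injective (widen_ord kn) by move=> i j /(congr1 val) /= /val_inj.
rewrite -[RHS]card_ord -(card_imset _ widen_inj).
apply: eq_card => i; rewrite !inE; apply/idP/imsetP => [ik | [j _ ->]]; last exact: (ltn_ord j).
by exists (Ordinal ik); last exact: val_inj.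
Qed.

(** * Partitions *)

Section Partitions.
Variables (X : finType) (D : {set X}).

Lemma trivIset_block_eq (P : {set {set X}}) (A B : {set X}) x :
  trivIset P -> A \in P -> B \in P -> x \in A -> x \in B -> A = B.
Proof. by move=> tP hA hB xA xB; rewrite -(def_pblock tP hA xA) (def_pblock tP hB xB). Qed.

Lemma partition_pblock (P : {set {set X}}) x : partition P D -> x \in D ->
  pblock P x \in P /\ x \in pblock P x.
Proof.
by move=> /and3P[/eqP covP _ _] xD; rewrite pblock_mem ?mem_pblock ?covP.
Qed.

Lemma partition_block_n0 (P : {set {set X}}) B : partition P D -> B \in P ->
  exists x, x \in B.
Proof.
move=> /and3P[_ _ P0] hB; have /set0Pn[x xB] : B != set0.
  by apply: contraNneq P0 => <-.
by exists x.
Qed.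

Lemma partition_block_sub (P : {set {set X}}) B : partition P D -> B \in P ->
  B \subset D.
Proof. by move=> /and3P[/eqP <- _ _] hB; apply: bigcup_sup. Qed.

Lemma partition_subset_eq (P Q : {set {set X}}) :
  partition P D -> partition Q D -> P \subset Q -> P = Q.
Proof.
move=> pP pQ sPQ; apply/eqP; rewrite eqEsubset sPQ; apply/subsetP=> B hB.
have [x xB] := partition_block_n0 pQ hB.
have [xP_P x_xP] := partition_pblock pP (subsetP (partition_block_sub pQ hB) x xB).
have /and3P[_ tQ _] := pQ.
by rewrite (trivIset_block_eq tQ hB (subsetP sPQ _ xP_P) xB x_xP).
Qed.

Lemma refines_trans (P Q R : {set {set X}}) :
  refines P Q -> refines Q R -> refines P R.
Proof.
move=> PQ QR B hB; have [E hE sBE] := PQ B hB; have [F hF sEF] := QR E hE.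
by exists F => //; apply: subset_trans sBE sEF.
Qed.

Lemma refines_block_subset (P Q : {set {set X}}) (A B : {set X}) x :
  partition Q D -> refines P Q -> A \in P -> B \in Q -> x \in A -> x \in B ->
  A \subset B.
Proof.
move=> /and3P[_ tQ _] PQ hA hB xA xB; have [B' hB' sAB'] := PQ A hA.
by rewrite (trivIset_block_eq tQ hB hB' xB (subsetP sAB' x xA)).
Qed.

Lemma refines_pblock_subset (P Q : {set {set X}}) B x :
  partition P D -> partition Q D -> refines P Q -> B \in Q -> x \in B ->
  pblock P x \in P /\ pblock P x \subset B.
Proof.
move=> pP pQ PQ QB xB.
have [xP_P x_xP] := partition_pblock pP (subsetP (partition_block_sub pQ QB) x xB).
by split; last exact: refines_block_subset pQ PQ xP_P QB x_xP xB.
Qed.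

Definition finer (P Q : {set {set X}}) := [exists A in P, exists B in Q, A \proper B].

Lemma finer_not_refines (P Q : {set {set X}}) :
  partition P D -> finer P Q -> ~ refines Q P.
Proof.
move=> pP /existsP[A /andP[hA /existsP[B /andP[hB pAB]]]] QP.
have [E hE sBE] := QP B hB; have [x xA] := partition_block_n0 pP hA.
have sAE : A \subset E := subset_trans (proper_sub pAB) sBE.
have /and3P[_ tP _] := pP.
rewrite -(trivIset_block_eq tP hA hE xA (subsetP sAE x xA)) in sBE.
by move: pAB; rewrite properE sBE andbF.
Qed.

Lemma finer_irrefl (P : {set {set X}}) : partition P D -> ~~ finer P P.
Proof.
by move=> pP; apply/negP=> /(finer_not_refines pP); apply=> B hB; exists B.
Qed.

Lemma refines_finer (P Q : {set {set X}}) :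
  partition P D -> partition Q D -> refines P Q -> P != Q -> finer P Q.
Proof.
move=> pP pQ PQ; apply: contraNT => nPQ; apply/eqP/esym/partition_subset_eq => //.
apply/subsetP=> B hB; apply: contraNT nPQ => nB.
have [x xB] := partition_block_n0 pQ hB.
have [xP_P xP_B] := refines_pblock_subset pP pQ PQ hB xB.
apply/existsP; exists (pblock P x); rewrite xP_P; apply/existsP; exists B.
by rewrite hB properEneq xP_B andbT; apply: contraNneq nB => <-.
Qed.

End Partitions.

(** * Forests without reticulation cycles *)

Section Forest.
Variables (V : finType) (arc : rel V).
Hypotheses (arc_acyclic : acyclic arc) (indeg_le1 : forall v, indeg arc v <= 1).

Lemma parent_uniq p q v : arc p v -> arc q v -> p = q.
Proof.
by move=> pv qv; apply: (card_le1_eqP (indeg_le1 v)); rewrite inE.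
Qed.

Lemma path_eq_last s p q :
  path arc s p -> path arc s q -> last s p = last s q -> p = q.
Proof.
elim/last_ind: p q => [|p a IHp] q; case/lastP: q => [|q b] //=.
- by move=> _ hq e; have := arc_acyclic hq (esym e); case: q {hq e}.
- by move=> hp _ e; have := arc_acyclic hp e; case: p {IHp hp e}.
rewrite !rcons_path !last_rcons => /andP[hp pa] /andP[hq qb] e; subst b.
by rewrite (IHp q hp hq (parent_uniq pa qb)).
Qed.

Lemma no_reticulation_cycle q1 q2 : ~ reticulation_cycle arc q1 q2.
Proof.
move=> [d1 d2 + [s [t [h1 h2 e1 e2 _]]]]; apply.
case: q1 d1 h1 e1 => [|a1 p1] // d1 /= h1 e1; case: q2 d2 h2 e2 => [|a2 p2] // d2 /= h2 e2.
subst a1 a2; by rewrite (path_eq_last d1 d2) // e1 e2.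
Qed.

Lemma no_shared_arc_of_forest : no_shared_arc arc.
Proof. by move=> q1 q2 q1' q2' /no_reticulation_cycle. Qed.

End Forest.

(** * Ranked X-trees *)

Section RankedTree.
Variables (X : finType) (T : rankedXTree X).
Local Notation V := (rt_V T).
Local Notation arc := (@rt_arc X T).
Local Notation rho := (rt_root T).
Local Notation phi := (rt_phi T).
Local Notation r := (@rt_rank X T).

Lemma rt_indeg_le1 v : indeg arc v <= 1.
Proof. by have [_ /(_ v)] := rt_is_tree T; rewrite /reticulation -ltnNge ltnS. Qed.

Lemma rt_parent_uniq p q v : arc p v -> arc q v -> p = q.
Proof. exact: (parent_uniq rt_indeg_le1). Qed.

Lemma rt_root_no_parent p : ~~ arc p rho.
Proof.
have [[[_ /eqP + _] _ _ _] _] := rt_is_tree T.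
by rewrite cards_eq0 => /eqP/setP/(_ p); rewrite !inE => ->.
Qed.

Lemma rt_reach v : connect arc rho v.
Proof. by have [[[_ _ ]]] := rt_is_tree T. Qed.

Lemma rt_rank_label x : r (phi x) = 0.
Proof. by have [[]] := rt_is_ranking T. Qed.

Lemma rt_rank_arc u v : arc u v -> r v < r u.
Proof.
have [[_ rank_lt _] _] := rt_is_ranking T; have [_ noret] := rt_is_tree T.
by move=> uv; apply: rank_lt.
Qed.

Lemma rt_rank_path u p :
  path arc u p -> r (last u p) <= r u /\ (p != [::] -> r (last u p) < r u).
Proof.
elim: p u => [|w p IHp] u //= /andP[uw /IHp[le_w lt_w]]; have lt_wu := rt_rank_arc uw.
by split=> [|_]; [apply: leq_trans le_w (ltnW lt_wu) | apply: leq_ltn_trans le_w lt_wu].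
Qed.

Lemma rt_rank_connect u v : connect arc u v -> r v <= r u.
Proof. by move=> /connectP[p /rt_rank_path[le _] ->]. Qed.

Lemma rt_connect_rank_lt u v : connect arc u v -> u != v -> r v < r u.
Proof.
by move=> /connectP[[|w p] /rt_rank_path[_ lt] ->] /=; rewrite ?eqxx // => _; apply: lt.
Qed.

Lemma rt_connect_antisym u v : connect arc u v -> connect arc v u -> u = v.
Proof.
move=> uv vu; apply/eqP; apply: contraT => ne_uv.
have := leq_trans (rt_connect_rank_lt uv ne_uv) (rt_rank_connect vu).
by rewrite ltnn.
Qed.

Lemma rt_connect_last_arc u v : connect arc u v -> u != v ->
  exists2 p, arc p v & connect arc u p.
Proof.
move=> /connectP[p + ->]; elim/last_ind: p => [|p w _] /=; first by rewrite eqxx.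
rewrite rcons_path last_rcons => /andP[up pw] _; exists (last u p) => //.
by apply/connectP; exists p.
Qed.

Lemma rt_connect_first_arc u v : connect arc u v -> u != v ->
  exists2 c, arc u c & connect arc c v.
Proof.
move=> /connectP[[|c p] /= + ->]; first by rewrite eqxx.
by move=> /andP[uc cp] _; exists c => //; apply/connectP; exists p.
Qed.

Lemma rt_exists_parent v : v != rho -> exists p, arc p v.
Proof.
by rewrite eq_sym => /(rt_connect_last_arc (rt_reach v))[p pv _]; exists p.
Qed.

Lemma rt_ancestor_in_root_path p a :
  path arc rho p -> connect arc a (last rho p) -> a \in rho :: p.
Proof.
elim/last_ind: p a => [|p w IHp] a /=.
  move=> _ a_rho; have [-> | ne] := eqVneq a rho; first exact: mem_head.
  have [q + _] := rt_connect_last_arc a_rho ne.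
  by rewrite (negbTE (rt_root_no_parent q)).
rewrite rcons_path last_rcons -rcons_cons mem_rcons in_cons.
move=> /andP[hp pw] aw; have [// | ne /=] := eqVneq a w.
have [q qw aq] := rt_connect_last_arc aw ne.
by rewrite IHp // -(rt_parent_uniq qw pw).
Qed.

Lemma rt_in_path_connect_last u p a :
  path arc u p -> a \in u :: p -> connect arc a (last u p).
Proof.
elim: p u => [|w p IHp] u /=; first by move=> _ /[!inE] /eqP->.
move=> /[dup] uwp /andP[_ wp] /[!inE] /predU1P[-> | /(IHp w wp) //].
exact: (path_connect (uwp : path arc u (w :: p)) (mem_last u (w :: p))).
Qed.

Lemma rt_ancestors_comparable a b z :
  connect arc a z -> connect arc b z -> connect arc a b || connect arc b a.
Proof.
move=> az /connectP[p bp zE]; elim/last_ind: p z az bp zE => [|p w IHp] z az /=.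
  by move=> _ zb; rewrite -zb az.
rewrite rcons_path last_rcons => /andP[bp pw] zw; subst z.
have [-> | ne] := eqVneq a w.
  by rewrite (connect_trans _ (connect1 pw)) ?orbT //; apply/connectP; exists p.
have [q qw aq] := rt_connect_last_arc az ne.
by apply: (IHp (last b p)) bp _; rewrite -(rt_parent_uniq qw pw).
Qed.

Lemma rt_label_no_child x w : ~~ arc (phi x) w.
Proof. by apply/negP=> /rt_rank_arc; rewrite rt_rank_label. Qed.

Lemma rt_leaf_labelled v : [forall w, ~~ arc v w] -> exists x, phi x = v.
Proof.
have [[_ _ _ labelled] _] := rt_is_tree T.
move=> /forallP no_child; apply/labelled/orP; left.
by rewrite /leafv /outdeg cards_eq0; apply/eqP/setP=> w; rewrite !inE (negbTE (no_child w)).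
Qed.

Lemma rt_exists_label_below u : exists x, connect arc u (phi x).
Proof.
elim: {u}(r u).+1 {-2}u (ltnSn (r u)) => // n IHn u ru.
have [/existsP[w uw] | ] := boolP [exists w, arc u w].
  have [x wx] := IHn w (leq_trans (rt_rank_arc uw) ru).
  by exists x; apply: connect_trans (connect1 uw) wx.
by rewrite negb_exists => /rt_leaf_labelled[x <-]; exists x.
Qed.

Lemma rt_arc_no_back u c : arc u c -> ~~ connect arc c u.
Proof. by move=> /rt_rank_arc; apply: contraL => /rt_rank_connect; rewrite leqNgt. Qed.

Lemma rt_exists_other_child u c : arc u c -> exists2 c', arc u c' & c' != c.
Proof.
move=> uc; have [/existsP[c' /andP[uc' ne]] | ] := boolP [exists c', arc u c' && (c' != c)].
  by exists c'.
(* A vertex with a single child is labelled, but labelled vertices have rank 0. *)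
rewrite negb_exists => /forallP only_c; exfalso.
have [[_ _ _ labelled] _] := rt_is_tree T.
have [x xu] : exists x, phi x = u.
  apply/labelled/orP; right; rewrite /tree_vertex rt_indeg_le1 /outdeg.
  apply/cards1P; exists c; apply/setP=> w; rewrite !inE.
  by apply/idP/eqP=> [uw | ->//]; apply/eqP; move: (only_c w); rewrite uw negbK.
by move: uc; rewrite -xu (negbTE (rt_label_no_child _ _)).
Qed.

Lemma rt_children_disjoint u c c' z : arc u c -> arc u c' -> c != c' ->
  connect arc c z -> connect arc c' z -> False.
Proof.
wlog cc' : c c' / connect arc c c'.
  move=> sym uc uc' ne cz c'z; case/orP: (rt_ancestors_comparable cz c'z).
    by move=> cc'; apply: (sym c c').
  by move=> c'c; apply: (sym c' c) => //; rewrite eq_sym.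
move=> uc uc' ne _ _; have [q qc' cq] := rt_connect_last_arc cc' ne.
by move: cq; rewrite (rt_parent_uniq qc' uc') (negbTE (rt_arc_no_back uc)).
Qed.

Definition cluster u := [set x | connect arc u (phi x)].

Lemma rt_cluster_subset u v : (cluster u \subset cluster v) = connect arc v u.
Proof.
apply/idP/idP => [s | vu]; last first.
  by apply/subsetP=> x; rewrite !inE; apply: connect_trans vu.
have [x ux] := rt_exists_label_below u.
have vx : connect arc v (phi x) by have := subsetP s x; rewrite !inE; apply.
case/orP: (rt_ancestors_comparable vx ux) => // uv.
have [-> | ne] := eqVneq u v; first exact: connect0.
have [c uc cv] := rt_connect_first_arc uv ne; have [c' uc' ne'] := rt_exists_other_child uc.
have [y c'y] := rt_exists_label_below c'.
have vy : connect arc v (phi y).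
  by have := subsetP s y; rewrite !inE; apply; apply: connect_trans (connect1 uc') c'y.
by case: (rt_children_disjoint uc uc' _ (connect_trans cv vy) c'y); rewrite eq_sym.
Qed.

Lemma rt_cluster_inj : injective cluster.
Proof. by move=> u v e; apply: rt_connect_antisym; rewrite -rt_cluster_subset e. Qed.

Lemma rt_cluster_proper u v : (cluster v \proper cluster u) = connect arc u v && (u != v).
Proof.
rewrite properE !rt_cluster_subset; have [uv | //] := boolP (connect arc u v).
by congr (~~ _); apply/idP/eqP => [vu | ->]; [apply: rt_connect_antisym | apply: connect0].
Qed.

Lemma rt_cluster_neq0 u : cluster u != set0.
Proof. by have [x ux] := rt_exists_label_below u; apply/set0Pn; exists x; rewrite inE. Qed.

Lemma rt_strict_descendantE w u : strict_descendant arc rho w u <-> connect arc u w.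
Proof.
split=> [through_u | uw p [hp wE]]; last by apply: rt_ancestor_in_root_path; rewrite ?wE.
have /connectP[p hp wE] := rt_reach w.
by rewrite wE; apply: rt_in_path_connect_last hp (through_u p (conj hp (esym wE))).
Qed.

Lemma rt_Sset u : Sset arc rho phi u = cluster u.
Proof. by apply/setP=> x; rewrite !inE; apply/asboolP/idP => /rt_strict_descendantE. Qed.

Lemma rt_Hset u : Hset arc rho phi u = set0.
Proof.
apply/setP=> x; rewrite !inE; apply/asboolP => -[[p [[hp xE] up]]]; apply.
by apply/rt_strict_descendantE; rewrite -xE; apply: rt_in_path_connect_last hp up.
Qed.

Lemma rt_Pof_Si i : Pof (Si arc rho phi r i) = [set cluster u | u in Vi arc r i].
Proof.
apply/setP=> B; apply/imsetP/imsetP => [[s] | [u ui ->]].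
  rewrite in_setU => /orP[] /imsetP[u ui ->] ->; first by exists u; rewrite ?rt_Sset.
  by move: ui; rewrite inE rt_Hset eqxx andbF.
exists (Sset arc rho phi u, Hset arc rho phi u); last by rewrite /= rt_Sset.
by rewrite in_setU; apply/orP; left; apply/imsetP; exists u.
Qed.

Lemma rt_rank_le_tsize v : r v <= tsize r.
Proof. by have [_ <-] := rt_is_ranking T; apply: map_f; rewrite mem_enum. Qed.

Lemma rt_rank_onto k : k <= tsize r -> exists v, r v = k.
Proof. by have [_ <-] := rt_is_ranking T => /mapP[v _ ->]; exists v. Qed.

Lemma rt_rank_root : r rho = tsize r.
Proof.
apply/eqP; rewrite eqn_leq rt_rank_le_tsize /=.
by have [v <-] := rt_rank_onto (leqnn (tsize r)); apply/rt_rank_connect/rt_reach.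
Qed.

Lemma rt_Vi_ancestor i j u w z : u \in Vi arc r i -> w \in Vi arc r j -> i <= j ->
  connect arc u z -> connect arc w z -> connect arc w u.
Proof.
rewrite !inE => /andP[ru _] /andP[_ /forallP w_top] ij uz wz.
case/orP: (rt_ancestors_comparable wz uz) => // uw.
have [-> | ne] := eqVneq u w; first exact: connect0.
have [p pw up] := rt_connect_last_arc uw ne.
have := implyP (w_top p) pw; rewrite ltnNge.
by rewrite (leq_trans (rt_rank_connect up) (leq_trans ru ij)).
Qed.

Lemma rt_Vi_exists_ancestor i z : r z <= i -> exists2 u, u \in Vi arc r i & connect arc u z.
Proof.
elim: {z}(i - r z).+1 {-2}z (ltnSn (i - r z)) => // n IHn z zn zi.
have [z_top | ] := boolP [forall p, arc p z ==> (i < r p)].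
  by exists z; rewrite ?inE ?zi ?connect0.
rewrite negb_forall => /existsP[p]; rewrite negb_imply -leqNgt => /andP[pz pi].
have zp := rt_rank_arc pz.
have [u ui up] := IHn p (leq_trans (ltn_sub2l (leq_trans zp pi) zp) zn) pi.
by exists u => //; apply: connect_trans up (connect1 pz).
Qed.

Lemma rt_Vi_exists_label_ancestor i x :
  exists2 u, u \in Vi arc r i & connect arc u (phi x).
Proof. by apply: rt_Vi_exists_ancestor; rewrite rt_rank_label. Qed.

Definition level_partition i := [set cluster u | u in Vi arc r i].

Lemma rt_level_partition i : partition (level_partition i) [set: X].
Proof.
apply/and3P; split.
- apply/eqP/setP=> x; rewrite inE; apply/bigcupP.
  have [u ui ux] := rt_Vi_exists_label_ancestor i x.
  by exists (cluster u); [apply: imset_f | rewrite inE].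
- apply/trivIsetP=> _ _ /imsetP[u ui ->] /imsetP[w wi ->] ne.
  rewrite -setI_eq0; apply/eqP/setP=> x; rewrite !inE; apply/negP=> /andP[ux wx].
  have uw := rt_Vi_ancestor ui wi (leqnn i) ux wx.
  by rewrite (rt_connect_antisym uw (rt_Vi_ancestor wi ui (leqnn i) wx ux)) eqxx in ne.
- by apply/imsetP=> -[u _ /esym/eqP]; rewrite (negbTE (rt_cluster_neq0 u)).
Qed.

Lemma rt_level_partition_refines i j : i <= j -> refines (level_partition i) (level_partition j).
Proof.
move=> ij _ /imsetP[u ui ->]; have [x ux] := rt_exists_label_below u.
have [w wj wx] := rt_Vi_exists_label_ancestor j x.
by exists (cluster w); [apply: imset_f | rewrite rt_cluster_subset (rt_Vi_ancestor ui wj ij ux wx)].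
Qed.

Lemma rt_level_partition_top : level_partition (tsize r) = [set [set: X]].
Proof.
have root_cluster : cluster rho = [set: X] by apply/setP=> x; rewrite !inE rt_reach.
apply/setP=> B; rewrite inE; apply/imsetP/eqP => [[u ui ->] | ->].
  have [-> // | /rt_exists_parent[p pu]] := eqVneq u rho.
  move: ui; rewrite inE => /andP[_ /forallP/(_ p)/implyP/(_ pu)].
  by rewrite ltnNge rt_rank_le_tsize.
exists rho => //; rewrite inE rt_rank_root leqnn; apply/forallP=> p.
by rewrite (negbTE (rt_root_no_parent p)).
Qed.

Lemma rt_partition_chainE : partition_chain T = [set level_partition i | i : 'I_(tsize r).+1].
Proof. by apply: eq_imset => i; rewrite rt_Pof_Si. Qed.

Lemma rt_partition_chain_chain : chain_with_top (partition_chain T).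
Proof.
rewrite rt_partition_chainE; split.
- by move=> _ /imsetP[i _ ->]; apply: rt_level_partition.
- by apply/imsetP; exists ord_max; rewrite //= rt_level_partition_top.
- move=> _ _ /imsetP[i _ ->] /imsetP[j _ ->].
  by case: (leqP i j) => ij; [left | right; move/ltnW: ij]; apply: rt_level_partition_refines.
Qed.

Lemma rt_mem_cover_partition_chain B :
  (B \in cover (partition_chain T)) = [exists u, B == cluster u].
Proof.
rewrite rt_partition_chainE; apply/bigcupP/existsP => [[_ /imsetP[i _ ->]] | [u /eqP->]].
  by move=> /imsetP[u _ ->]; exists u.
have ru : r u < (tsize r).+1 by rewrite ltnS rt_rank_le_tsize.
exists (level_partition (Ordinal ru)); first exact: imset_f.
apply: imset_f; rewrite inE leqnn; apply/forallP=> p; apply/implyP; exact: rt_rank_arc.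
Qed.

Lemma rt_arcE u v : arc u v = (cluster v \proper cluster u) &&
  ~~ [exists B, [&& B \in cover (partition_chain T), cluster v \proper B & B \proper cluster u]].
Proof.
rewrite rt_cluster_proper; apply/idP/idP => [uv | /andP[/andP[uv ne] no_between]].
  have ne : u != v by apply: contraTneq (rt_rank_arc uv) => ->; rewrite ltnn.
  rewrite connect1 // ne; apply/existsP=> -[B]; rewrite rt_mem_cover_partition_chain.
  case/and3P=> /existsP[w /eqP->]; rewrite !rt_cluster_proper => /andP[wv wne] /andP[uw une].
  have [q qv wq] := rt_connect_last_arc wv wne; rewrite (rt_parent_uniq qv uv) in wq.
  by move: une; rewrite (rt_connect_antisym uw wq) eqxx.
have [p pv up] := rt_connect_last_arc uv ne; have [<- // | pne] := eqVneq p u.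
case/existsP: no_between; exists (cluster p).
rewrite rt_mem_cover_partition_chain !rt_cluster_proper connect1 // up [u == p]eq_sym pne.
have pv_ne : p != v by apply: contraTneq (rt_rank_arc pv) => ->; rewrite ltnn.
by rewrite pv_ne /= !andbT; apply/existsP; exists p.
Qed.

Lemma rt_label_clusterE x :
  cluster (phi x) = \bigcap_(B in cover (partition_chain T) | x \in B) B.
Proof.
apply/eqP; rewrite eqEsubset; apply/andP; split.
  apply/bigcapsP=> B /andP[]; rewrite rt_mem_cover_partition_chain => /existsP[w /eqP->].
  by rewrite inE rt_cluster_subset.
apply: bigcap_inf; rewrite inE connect0 andbT rt_mem_cover_partition_chain.
by apply/existsP; exists (phi x).
Qed.

Lemma rt_level_partition_below i u :
  [exists D in level_partition i, D \proper cluster u] = (i < r u).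
Proof.
apply/idP/idP => [/existsP[_ /andP[/imsetP[w wi ->]]] | iu].
  rewrite rt_cluster_proper => /andP[uw ne]; have [p pw up] := rt_connect_last_arc uw ne.
  move: wi; rewrite inE => /andP[_ /forallP/(_ p)/implyP/(_ pw) ip].
  exact: leq_trans ip (rt_rank_connect up).
have [x ux] := rt_exists_label_below u.
have [w wi wx] := rt_Vi_exists_label_ancestor i x.
apply/existsP; exists (cluster w); rewrite imset_f //= rt_cluster_proper.
move: wi; rewrite inE => /andP[rw _].
case/orP: (rt_ancestors_comparable ux wx) => [uw | wu].
  by rewrite uw; apply: contraTneq iu => ->; rewrite -leqNgt.
by move: (leq_trans iu (leq_trans (rt_rank_connect wu) rw)); rewrite ltnn.
Qed.

Lemma rt_level_partition_inj i j : i <= tsize r -> j <= tsize r ->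
  level_partition i = level_partition j -> i = j.
Proof.
wlog ij : i j / i < j.
  move=> sym hi hj e; case: (ltngtP i j) => [ij | ji | //]; first exact: sym.
  by apply/esym/sym.
move=> _ hj e; have [v rv] := rt_rank_onto hj.
by have := rt_level_partition_below i v; rewrite e rt_level_partition_below rv ij ltnn.
Qed.

Lemma rt_rank_chainE u :
  r u = #|[set Q in partition_chain T | [exists D in Q, D \proper cluster u]]|.
Proof.
have -> : [set Q in partition_chain T | [exists D in Q, D \proper cluster u]] =
    [set level_partition (nat_of_ord i) | i in [pred i : 'I_(tsize r).+1 | i < r u]].
  apply/setP=> Q; rewrite inE rt_partition_chainE; apply/andP/imsetP.
    by move=> [/imsetP[i _ ->]]; rewrite rt_level_partition_below; exists i.
  by move=> [i iu ->]; rewrite imset_f // rt_level_partition_below.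
rewrite card_in_imset ?card_ord_lt //; first by rewrite ltnW // ltnS rt_rank_le_tsize.
by move=> i j _ _ /rt_level_partition_inj e; apply/val_inj/e; rewrite -ltnS.
Qed.

End RankedTree.

(** * The chain determines the tree *)

Lemma connect_morph (U W : finType) (e : rel U) (e' : rel W) (f : U -> W) :
  (forall u v, e' (f u) (f v) = e u v) ->
  forall u v, connect e u v -> connect e' (f u) (f v).
Proof.
move=> f_e u v /connectP[p + ->]; elim: p u => [|w p IHp] u /=; first by rewrite connect0.
by move=> /andP[uw /IHp]; apply: connect_trans; apply: connect1; rewrite f_e.
Qed.

Section Isomorphism.
Variables (X : finType) (T1 T2 : rankedXTree X).
Variables (f : rt_V T1 -> rt_V T2) (g : rt_V T2 -> rt_V T1).
Hypotheses (fK : cancel f g) (gK : cancel g f).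
Hypothesis f_arc : forall u v, rt_arc (f u) (f v) = rt_arc u v.
Hypothesis f_label : forall x, f (rt_phi T1 x) = rt_phi T2 x.
Hypothesis f_rank : forall v, rt_rank v = rt_rank (f v).

Lemma iso_connect u v : connect (@rt_arc X T2) (f u) (f v) = connect (@rt_arc X T1) u v.
Proof.
apply/idP/idP; last exact: connect_morph.
have g_arc a b : rt_arc (g a) (g b) = rt_arc a b by rewrite -f_arc !gK.
by move=> /(connect_morph g_arc); rewrite !fK.
Qed.

Lemma iso_cluster u : cluster (f u) = cluster u.
Proof. by apply/setP=> x; rewrite !inE -f_label iso_connect. Qed.

Lemma iso_tsize : tsize (@rt_rank X T1) = tsize (@rt_rank X T2).
Proof.
apply/eqP; rewrite eqn_leq; apply/andP; split.
  by have [v <-] := rt_rank_onto (leqnn (tsize (@rt_rank X T1))); rewrite f_rank rt_rank_le_tsize.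
have [v <-] := rt_rank_onto (leqnn (tsize (@rt_rank X T2))).
by rewrite -(gK v) -f_rank rt_rank_le_tsize.
Qed.

Lemma iso_Vi i u : (f u \in Vi (@rt_arc X T2) (@rt_rank X T2) i) =
  (u \in Vi (@rt_arc X T1) (@rt_rank X T1) i).
Proof.
rewrite !inE -f_rank; congr (_ && _); apply/forallP/forallP => top p.
  by rewrite -f_arc f_rank; apply: top.
by rewrite -(gK p) f_arc -f_rank; apply: top.
Qed.

Lemma iso_level_partition i : level_partition T2 i = level_partition T1 i.
Proof.
apply/setP=> B; apply/imsetP/imsetP => -[u ui ->].
  by exists (g u); rewrite -?iso_Vi -?iso_cluster gK.
by exists (f u); rewrite ?iso_Vi ?iso_cluster.
Qed.

End Isomorphism.

Lemma partition_chain_iso (X : finType) (T1 T2 : rankedXTree X) :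
  rt_iso T1 T2 -> partition_chain T1 = partition_chain T2.
Proof.
move=> [f [[g fK gK] f_arc f_label f_rank]].
have sizeE := iso_tsize gK f_rank.
rewrite !rt_partition_chainE; apply/setP=> Q.
have levelE := iso_level_partition fK gK f_arc f_label f_rank.
apply/imsetP/imsetP => -[i _ ->].
  by exists (cast_ord (congr1 S sizeE) i); rewrite ?levelE.
by exists (cast_ord (esym (congr1 S sizeE)) i); rewrite ?levelE.
Qed.

Section Reconstruction.
Variables (X : finType) (T1 T2 : rankedXTree X).
Hypothesis chainE : partition_chain T1 = partition_chain T2.

Lemma exists_same_cluster (u : rt_V T1) : exists w : rt_V T2, cluster w = cluster u.
Proof.
have : cluster u \in cover (partition_chain T2).
  by rewrite -chainE rt_mem_cover_partition_chain; apply/existsP; exists u.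
by rewrite rt_mem_cover_partition_chain => /existsP[w /eqP]; exists w.
Qed.

Definition cluster_transport (u : rt_V T1) : rt_V T2 :=
  odflt (rt_root T2) [pick w | cluster w == cluster u].

Lemma cluster_transportE u : cluster (cluster_transport u) = cluster u.
Proof.
rewrite /cluster_transport; case: pickP => [w /eqP // | none].
by have [w wu] := exists_same_cluster u; move: (none w); rewrite wu eqxx.
Qed.

End Reconstruction.

Lemma iso_of_partition_chain (X : finType) (T1 T2 : rankedXTree X) :
  partition_chain T1 = partition_chain T2 -> rt_iso T1 T2.
Proof.
move=> chainE; have f_cluster := cluster_transportE chainE.
have g_cluster := cluster_transportE (esym chainE).
exists (@cluster_transport X T1 T2); split.
- exists (@cluster_transport X T2 T1) => u; apply: rt_cluster_inj.
    by rewrite g_cluster f_cluster.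
  by rewrite f_cluster g_cluster.
- by move=> u v; rewrite !rt_arcE !f_cluster chainE.
- by move=> x; apply: rt_cluster_inj; rewrite f_cluster !rt_label_clusterE chainE.
- by move=> v; rewrite rt_rank_chainE (rt_rank_chainE (cluster_transport T2 v)) f_cluster chainE.
Qed.

(** * Every chain comes from a tree *)

Section ChainTree.
Variables (X : finType) (C : {set {set {set X}}}).
Hypotheses (chainC : chain_with_top C) (hX : 0 < #|X|).

Lemma chain_partition P : P \in C -> partition P [set: X].
Proof. by have [partP _ _] := chainC; apply: partP. Qed.

Lemma chain_top : [set [set: X]] \in C.
Proof. by have [_ topC _] := chainC. Qed.

Lemma chain_finer_refines P Q : P \in C -> Q \in C -> finer P Q -> refines P Q.
Proof.
move=> PC QC PQ; have [_ _ /(_ P Q PC QC)[] // QP] := chainC.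
by case: (finer_not_refines (chain_partition PC) PQ QP).
Qed.

Lemma chain_finer_total P Q : P \in C -> Q \in C -> P != Q -> finer P Q || finer Q P.
Proof.
move=> PC QC ne; have [pP pQ] := (chain_partition PC, chain_partition QC).
have [_ _ /(_ P Q PC QC)[] ref] := chainC; first by rewrite (refines_finer pP pQ ref ne).
by rewrite (refines_finer pQ pP ref) ?orbT // eq_sym.
Qed.

Lemma chain_finer_trans P Q R : P \in C -> Q \in C -> R \in C ->
  finer P Q -> finer Q R -> finer P R.
Proof.
move=> PC QC RC PQ QR; apply: (refines_finer (chain_partition PC) (chain_partition RC)).
  exact: refines_trans (chain_finer_refines PC QC PQ) (chain_finer_refines QC RC QR).
apply: contra_notN (finer_not_refines (chain_partition PC) PQ) => /eqP PR.
by rewrite PR; apply: chain_finer_refines.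
Qed.

Lemma chain_finer_pblock_subset P Q B x : P \in C -> Q \in C -> finer P Q ->
  B \in Q -> x \in B -> pblock P x \in P /\ pblock P x \subset B.
Proof.
move=> PC QC PQ; apply: refines_pblock_subset (chain_partition PC) (chain_partition QC) _.
exact: chain_finer_refines.
Qed.

Definition height Q := #|[set P in C | finer P Q]|.

Lemma height_lt Q Q' : Q \in C -> Q' \in C -> finer Q Q' -> height Q < height Q'.
Proof.
move=> QC Q'C QQ'; apply/proper_card/properP; split.
  apply/subsetP=> P; rewrite !inE => /andP[PC PQ]; rewrite PC.
  exact: chain_finer_trans PC QC Q'C PQ QQ'.
by exists Q; rewrite !inE QC ?QQ' // (negbTE (finer_irrefl (chain_partition QC))).
Qed.

Lemma height_bound Q : Q \in C -> height Q < #|C|.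
Proof.
move=> QC; rewrite (cardsD1 Q C) QC add1n ltnS; apply: subset_leq_card.
apply/subsetP=> P; rewrite !inE => /andP[PC PQ]; rewrite PC andbT.
by apply: contraTneq PQ => ->; rewrite (finer_irrefl (chain_partition QC)).
Qed.

Lemma height_inj : {in C &, injective height}.
Proof.
move=> Q Q' QC Q'C e; apply/eqP; apply: contraT => /(chain_finer_total QC Q'C).
by case/orP=> [/(height_lt QC Q'C) | /(height_lt Q'C QC)]; rewrite e ltnn.
Qed.

Lemma height_onto k : k < #|C| -> exists2 Q, Q \in C & height Q = k.
Proof.
move=> kC; set hs := [seq height Q | Q <- enum C].
have hs_uniq : uniq hs.
  by rewrite map_inj_in_uniq ?enum_uniq // => Q Q'; rewrite !mem_enum; apply: height_inj.
have hs_sub : {subset hs <= iota 0 #|C|}.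
  by move=> _ /mapP[Q QC ->]; rewrite mem_iota height_bound // -mem_enum.
have hs_size : size (iota 0 #|C|) <= size hs by rewrite size_iota size_map -cardE.
have [_ hsE] := uniq_min_size hs_uniq hs_sub hs_size.
have /mapP[Q QC ->] : k \in hs by rewrite hsE mem_iota.
by exists Q; rewrite // -mem_enum.
Qed.

Definition chain_blocks := cover C.

Lemma setT_chain_blocks : [set: X] \in chain_blocks.
Proof. by apply/bigcupP; exists [set [set: X]]; rewrite ?chain_top ?set11. Qed.

Lemma chain_block_n0 B : B \in chain_blocks -> exists x, x \in B.
Proof. by move=> /bigcupP[P PC PB]; apply: partition_block_n0 (chain_partition PC) PB. Qed.

Lemma chain_blocks_laminar A B x : A \in chain_blocks -> B \in chain_blocks ->
  x \in A -> x \in B -> (A \subset B) || (B \subset A).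
Proof.
move=> /bigcupP[P PC PA] /bigcupP[Q QC QB] xA xB; have [_ _ /(_ P Q PC QC)[] ref] := chainC.
  by rewrite (refines_block_subset (chain_partition QC) ref PA QB xA xB).
by rewrite (refines_block_subset (chain_partition PC) ref QB PA xB xA) orbT.
Qed.

Definition block : finType := {B : {set X} | B \in chain_blocks}.

Definition block_arc : rel block := fun a b =>
  (val b \proper val a) && ~~ [exists c : block, (val b \proper val c) && (val c \proper val a)].

Definition block_root : block := exist _ [set: X] setT_chain_blocks.

Definition block_label (x : X) : block := [arg min_(B < block_root | x \in val B) #|val B|].

Definition block_rank (B : block) := #|[set P in C | [exists D in P, D \proper val B]]|.

Lemma mem_block_label x : x \in val (block_label x).
Proof. by rewrite /block_label; case: arg_minnP; rewrite ?inE. Qed.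

Lemma block_label_min x (B : block) : x \in val B -> val (block_label x) \subset val B.
Proof.
move=> xB; rewrite /block_label; case: arg_minnP => [|m xm m_min]; first by rewrite inE.
case/orP: (chain_blocks_laminar (valP m) (valP B) xm xB) => // Bm.
suff -> : val B = val m by [].
by apply/eqP; rewrite eqEcard Bm m_min.
Qed.

Lemma block_arc_proper a b : block_arc a b -> val b \proper val a.
Proof. by case/andP. Qed.

Lemma block_exists_child (a D : block) : val D \proper val a ->
  exists2 c, block_arc a c & val D \subset val c.
Proof.
move=> Da; pose between (c : block) := (val D \subset val c) && (val c \proper val a).
have betweenD : between D by rewrite /between subxx Da.
case: (arg_maxnP (fun c : block => #|val c|) betweenD) => c /andP[Dc ca] c_max.
exists c => //; rewrite /block_arc ca; apply/existsP => -[e /andP[ce ea]].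
have := c_max e; rewrite /between (subset_trans Dc (proper_sub ce)) ea => /(_ isT).
by apply/negP; rewrite -ltnNge proper_card.
Qed.

Lemma block_connectE (a b : block) : connect block_arc a b = (val b \subset val a).
Proof.
apply/idP/idP => [/connectP[p + ->] | ].
  elim: p a => [|c p IHp] a /=; first by rewrite subxx.
  by move=> /andP[/block_arc_proper/proper_sub ac /IHp cp]; apply: subset_trans cp ac.
elim: {a}#|val a|.+1 {-2}a (ltnSn #|val a|) => // n IHn a an ba.
have [/val_inj-> | ne] := eqVneq (val b) (val a); first exact: connect0.
have ba_proper : val b \proper val a by rewrite properEneq ne ba.
have [c ac bc] := block_exists_child ba_proper.
apply: connect_trans (connect1 ac) (IHn c _ bc).
exact: leq_trans (proper_card (block_arc_proper ac)) an.
Qed.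

Lemma block_indeg v : indeg block_arc v <= 1.
Proof.
apply/card_le1_eqP=> p q; rewrite !inE => pv qv.
have [x xv] := chain_block_n0 (valP v).
have xp := subsetP (proper_sub (block_arc_proper pv)) x xv.
have xq := subsetP (proper_sub (block_arc_proper qv)) x xv.
have [/val_inj // | ne] := eqVneq (val p) (val q); exfalso.
case/orP: (chain_blocks_laminar (valP p) (valP q) xp xq) => sub.
  case/andP: qv => _ /existsP; apply; exists p; by rewrite block_arc_proper // properEneq ne.
case/andP: pv => _ /existsP; apply; exists q; by rewrite block_arc_proper // properEneq eq_sym ne.
Qed.

Lemma block_acyclic : acyclic block_arc.
Proof.
move=> v [|w p] //= /andP[/block_arc_proper vw wp] pv.
have : connect block_arc w (last w p) by apply/connectP; exists p.
by rewrite pv block_connectE; move: vw; rewrite properE => /andP[_ /negP].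
Qed.

Lemma block_root_indeg : indeg block_arc block_root = 0.
Proof.
apply/eqP; rewrite cards_eq0; apply/eqP/setP=> p; rewrite !inE.
by apply/negbTE/negP=> /block_arc_proper; rewrite properE subsetT andbF.
Qed.

Lemma block_label_child x (v : block) : x \in val v -> val (block_label x) != val v ->
  exists2 c, block_arc v c & x \in val c.
Proof.
move=> xv ne; have xv_proper : val (block_label x) \proper val v.
  by rewrite properEneq ne block_label_min.
have [c vc sub] := block_exists_child xv_proper.
by exists c; last exact: subsetP sub x (mem_block_label x).
Qed.

Lemma block_label_onto v :
  leafv block_arc v || tree_vertex block_arc v && (outdeg block_arc v == 1) ->
  exists x, block_label x = v.
Proof.
move=> /orP[leaf | /andP[_ /cards1P[c vcE]]].
  have [x xv] := chain_block_n0 (valP v); exists x.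
  have [/val_inj // | ne] := eqVneq (val (block_label x)) (val v).
  have [c vc _] := block_label_child xv ne.
  by move: leaf; rewrite /leafv /outdeg cards_eq0 => /eqP/setP/(_ c); rewrite !inE vc.
have vc : block_arc v c by have := set11 c; rewrite -vcE inE.
have [_ [x xv xc]] := properP (block_arc_proper vc); exists x.
have [/val_inj // | ne] := eqVneq (val (block_label x)) (val v).
have [c' vc' xc'] := block_label_child xv ne.
have : c' \in [set c] by rewrite -vcE inE.
by rewrite inE => /eqP c'c; rewrite -c'c xc' in xc.
Qed.

Lemma block_tree : rooted_X_tree block_arc block_root block_label.
Proof.
split; last by move=> v; rewrite /reticulation -ltnNge ltnS block_indeg.
split => //; last exact: block_label_onto.
- split; [exact: block_acyclic | exact: block_root_indeg | ].
  by move=> v; rewrite block_connectE subsetT.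
- by move=> v; apply: leq_trans (block_indeg v) _.
- exact: no_shared_arc_of_forest block_acyclic block_indeg.
Qed.

Lemma block_rank_label x : block_rank (block_label x) = 0.
Proof.
apply/eqP; rewrite cards_eq0; apply/eqP/setP=> P; rewrite !inE.
apply/negbTE/negP=> /andP[PC /existsP[D /andP[PD Dx]]].
have [xP_P x_xP] := partition_pblock (chain_partition PC) (in_setT x).
have xP_block : pblock P x \in chain_blocks by apply/bigcupP; exists P.
have := block_label_min (B := exist (fun B => B \in chain_blocks) _ xP_block) x_xP => /= xxP.
have [y yD] := partition_block_n0 (chain_partition PC) PD.
have /and3P[_ tP _] := chain_partition PC.
have y_xP : y \in pblock P x by apply/(subsetP xxP)/(subsetP (proper_sub Dx)).
by move: Dx; rewrite (trivIset_block_eq tP PD xP_P yD y_xP) properE xxP andbF.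
Qed.

Lemma block_rank_arc u v : block_arc u v -> block_rank v < block_rank u.
Proof.
move=> /block_arc_proper vu; apply/proper_card/properP; split.
  apply/subsetP=> P; rewrite !inE => /andP[-> /existsP[D /andP[PD Dv]]].
  by apply/existsP; exists D; rewrite PD (proper_trans Dv vu).
have /bigcupP[P PC Pv] := valP v.
exists P; first by rewrite inE PC; apply/existsP; exists (val v); rewrite Pv.
rewrite inE PC; apply/existsP => -[D /andP[PD Dv]].
have [y yD] := partition_block_n0 (chain_partition PC) PD.
have /and3P[_ tP _] := chain_partition PC.
have DvE := trivIset_block_eq tP PD Pv yD (subsetP (proper_sub Dv) y yD).
by move: Dv; rewrite DvE properE subxx.
Qed.

Lemma block_rank_bound B : block_rank B < #|C|.
Proof.
rewrite (cardsD1 [set [set: X]] C) chain_top add1n ltnS; apply: subset_leq_card.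
apply/subsetP=> P; rewrite !inE => /andP[PC /existsP[D /andP[PD DB]]]; rewrite PC andbT.
apply: contraTneq PD => ->; rewrite inE; apply: contraTneq DB => ->.
by rewrite properE subsetT andbF.
Qed.

Lemma exists_new_block Q : Q \in C ->
  exists2 B, B \in Q & forall P, P \in C -> finer P Q -> B \notin P.
Proof.
move=> QC; have [/existsP[P0 /andP[P0C P0Q]] | no_finer] := boolP [exists P in C, finer P Q].
  pose finer_in_C P := (P \in C) && finer P Q.
  have P0_ok : finer_in_C P0 by rewrite /finer_in_C P0C P0Q.
  case: (arg_maxnP height P0_ok) => M /andP[MC MQ] M_max.
  have /subsetPn[B QB MB] : ~~ (Q \subset M).
    apply: contraTN MQ => /(partition_subset_eq (chain_partition QC) (chain_partition MC)) <-.
    exact: finer_irrefl (chain_partition QC).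
  exists B => // P PC PQ; apply: contraNN MB => PB.
  have [<- // | ne] := eqVneq P M.
  case/orP: (chain_finer_total PC MC ne) => [PM | MP].
    have [E ME BE] := chain_finer_refines PC MC PM PB.
    have [x xB] := partition_block_n0 (chain_partition QC) QB.
    have EB := refines_block_subset (chain_partition QC) (chain_finer_refines MC QC MQ) ME QB
      (subsetP BE x xB) xB.
    suff <- : E = B by [].
    by apply/eqP; rewrite eqEsubset EB BE.
  have P_ok : finer_in_C P by rewrite /finer_in_C PC PQ.
  by have := leq_ltn_trans (M_max P P_ok) (height_lt MC PC MP); rewrite ltnn.
have [x _] := card_gt0P hX.
have [xQ_Q _] := partition_pblock (chain_partition QC) (in_setT x).
exists (pblock Q x) => // P PC PQ; case/existsP: no_finer; exists P; by rewrite PC.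
Qed.

Lemma block_rank_new (B : block) Q : Q \in C -> val B \in Q ->
  (forall P, P \in C -> finer P Q -> val B \notin P) -> block_rank B = height Q.
Proof.
move=> QC QB new; apply: eq_card => P; rewrite !inE.
have [PC /= | //] := boolP (P \in C); apply/idP/idP => [/existsP[D /andP[PD DB]] | PQ].
  by apply/existsP; exists D; rewrite PD; apply/existsP; exists (val B); rewrite QB.
have [x xB] := partition_block_n0 (chain_partition QC) QB.
have [xP_P x_xP] := partition_pblock (chain_partition PC) (in_setT x).
apply/existsP; exists (pblock P x); rewrite xP_P properEneq.
rewrite (refines_block_subset (chain_partition QC) (chain_finer_refines PC QC PQ) xP_P QB x_xP xB).
by rewrite andbT; apply: contraNneq (new P PC PQ) => xPB; move: xP_P; rewrite xPB.
Qed.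

Lemma block_rank_onto k : k < #|C| -> exists B, block_rank B = k.
Proof.
move=> kC; have [Q QC <-] := height_onto kC; have [B QB new] := exists_new_block QC.
have B_block : B \in chain_blocks by apply/bigcupP; exists Q.
by exists (exist _ B B_block); apply: block_rank_new.
Qed.

Lemma chain_card_gt0 : 0 < #|C|.
Proof. by apply/card_gt0P; exists [set [set: X]]; apply: chain_top. Qed.

Lemma block_rank_image k :
  (k \in [seq block_rank v | v <- enum block]) = (k < #|C|).
Proof.
apply/mapP/idP => [[v _ ->] | /(block_rank_onto)[B <-]]; first exact: block_rank_bound.
by exists B; rewrite ?mem_enum.
Qed.

Lemma block_tsize : tsize block_rank = #|C|.-1.
Proof. by apply: tsize_iota => k; rewrite prednK ?chain_card_gt0 ?block_rank_image. Qed.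

Lemma block_ranking : ranking block_arc block_label block_rank.
Proof.
split; last first.
  by move=> k; rewrite block_tsize block_rank_image -[X in k < X](prednK chain_card_gt0).
split; [exact: block_rank_label | by move=> u v /block_rank_arc | ].
by move=> u v _; rewrite /reticulation leqNgt ltnS block_indeg.
Qed.

Definition chain_tree : rankedXTree X :=
  RankedXTree block_tree (block_ranking).

Local Notation T := chain_tree.

Lemma chain_tree_cluster (u : block) : cluster (T := T) u = val u.
Proof.
apply/setP=> x; rewrite inE /= block_connectE; apply/idP/idP => [sub | xu].
  exact: subsetP sub x (mem_block_label x).
exact: block_label_min.
Qed.

Lemma chain_tree_Vi Q (B : block) : Q \in C -> val B \in Q ->
  B \in Vi block_arc block_rank (height Q).
Proof.
move=> QC QB; rewrite inE; apply/andP; split.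
  apply: subset_leq_card; apply/subsetP=> P; rewrite !inE => /andP[-> /existsP[D /andP[PD DB]]].
  by apply/existsP; exists D; rewrite PD; apply/existsP; exists (val B); rewrite QB.
apply/forallP=> p; apply/implyP=> /block_arc_proper Bp.
apply/proper_card/properP; split.
  apply/subsetP=> P; rewrite !inE => /andP[PC PQ]; rewrite PC.
  have [x xB] := partition_block_n0 (chain_partition QC) QB.
  have [xP_P xP_B] := chain_finer_pblock_subset PC QC PQ QB xB.
  by apply/existsP; exists (pblock P x); rewrite xP_P (sub_proper_trans xP_B Bp).
exists Q; first by rewrite inE QC; apply/existsP; exists (val B); rewrite QB Bp.
by rewrite inE QC (negbTE (finer_irrefl (chain_partition QC))).
Qed.

Lemma chain_tree_level_partition Q : Q \in C -> level_partition T (height Q) = Q.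
Proof.
move=> QC; apply/esym/(partition_subset_eq (chain_partition QC) (rt_level_partition T _)).
apply/subsetP=> B QB; have B_block : B \in chain_blocks by apply/bigcupP; exists Q.
apply/imsetP; exists (exist _ B B_block); last by rewrite chain_tree_cluster.
exact: chain_tree_Vi.
Qed.

Lemma partition_chain_chain_tree : partition_chain T = C.
Proof.
have sizeE : tsize (@rt_rank X T) = #|C|.-1 := block_tsize.
rewrite rt_partition_chainE; apply/setP=> Q; apply/imsetP/idP => [[i _ ->] | QC].
  have iC : i < #|C| by rewrite -(prednK chain_card_gt0) -sizeE.
  by have [Q' Q'C <-] := height_onto iC; rewrite chain_tree_level_partition.
have hQ : height Q < (tsize (@rt_rank X T)).+1.
  by rewrite sizeE prednK ?chain_card_gt0 ?height_bound.
by exists (Ordinal hQ); rewrite //= chain_tree_level_partition.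
Qed.

End ChainTree.

Theorem mainTheorem3 (X : finType) (hX : 0 < #|X|) :
  [/\ (* well defined on isomorphism classes *)
      forall T1 T2 : rankedXTree X, rt_iso T1 T2 -> partition_chain T1 = partition_chain T2,
      (* lands in chains of partitions containing {X} *)
      forall T : rankedXTree X, chain_with_top (partition_chain T),
      (* injective on isomorphism classes *)
      forall T1 T2 : rankedXTree X, partition_chain T1 = partition_chain T2 -> rt_iso T1 T2 &
      (* surjective *)
      forall C : {set {set {set X}}}, chain_with_top C ->
        exists T : rankedXTree X, partition_chain T = C].
Proof.
split.
- exact: partition_chain_iso.
- exact: rt_partition_chain_chain.
- exact: iso_of_partition_chain.
- by move=> C chainC; exists (chain_tree chainC hX); apply: partition_chain_chain_tree.
Qed.
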